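(* For every integer $n\ge 1$, let $\overline{P}(n)_2$ be the $n\times n$ integer matrix with entries $\overline{p}_{i,j}\in\{0,1\}$, $0\le i,j<n$, defined by $\overline{p}_{i,j}\equiv\binom{i+j}{i}\pmod 2$. Then the determinant over $\mathbf{Z}$ satisfies $$\det(\overline{P}(n)_2)=\prod_{k=0}^{n-1}(-1)^{s_k},$$ where $s_k$ is the Thue–Morse sequence.
   Context: The Thue–Morse sequence is defined by $s_k=\sum_i\nu_i \pmod 2\in\{0,1\}$ where $k=\sum_i \nu_i 2^i$ is the binary expansion of $k$; equivalently $s_0=0$, $s_{2k}=s_k$, $s_{2k+1}=1-s_k$. *)

From mathcomp Require Import all_boot all_order all_algebra.
Set Implicit Arguments. Unset Strict Implicit. Unset Printing Implicit Defensive.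
Import GRing.Theory.

(* Thue-Morse: s_k = (sum of binary digits of k) mod 2.
   The binary digits of k are (k %/ 2^i) %% 2 for i < k.+1 (k < 2^(k+1)). *)
Definition thue_morse (k : nat) : nat :=
  (\sum_(i < k.+1) (k %/ 2 ^ i) %% 2) %% 2.

Definition Pbar2 (n : nat) : 'M[int]_n :=
  \matrix_(i < n, j < n) (Posz ('C(i + j, i) %% 2)).

(* Over Z the matrix factors as L D L^T, with L = (C(i,k) mod 2) lower
   unitriangular and D = diag((-1)^(s_k)), so its determinant is det D.
   Entrywise the factorization reads
     [C(i+j,i) odd] = sum_k [C(i,k) odd] (-1)^(s_k) [C(j,k) odd],
   proved by strong induction on i: splitting i, j, k into their last binary
   digit and the rest, Lucas' theorem mod 2 and s_(2k+e) = s_k + e turn the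
   sum into (1 - [i and j both odd]) times the same sum for i/2, j/2, and the
   carry in the last digit of i + j produces the same factor on the left. *)

From mathcomp Require Import all_boot all_order all_algebra ring zify.
Import GRing.Theory.

Lemma big_ord_trunc {R : Type} {idx : R} (op : Monoid.law idx) (F : nat -> R) {m n : nat} :
  m <= n -> (forall k, m <= k -> F k = idx) ->
  \big[op/idx]_(k < n) F k = \big[op/idx]_(k < m) F k.
Proof.
move=> le_mn F0; rewrite (big_ord_widen _ _ le_mn) [RHS]big_mkcond.
by apply: eq_bigr => k _; case: ltnP => // /F0.
Qed.

Lemma big_ord_double {R : Type} {idx : R} (op : Monoid.law idx) (F : nat -> R) (n : nat) :
  \big[op/idx]_(k < n.*2) F k = \big[op/idx]_(k < n) op (F k.*2) (F k.*2.+1).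
Proof.
elim: n => [|n IH]; first by rewrite !big_ord0.
by rewrite doubleS !big_ord_recr /= IH Monoid.mulmA.
Qed.

Lemma odd_binS n k : odd 'C(n.+1, k.+1) = odd 'C(n, k.+1) (+) odd 'C(n, k).
Proof. by rewrite binS oddD. Qed.

Lemma odd_bin_lucas (b e : bool) m c :
  odd 'C(b + m.*2, e + c.*2) = (e <= b) && odd 'C(m, c).
Proof.
have row_odd n : (forall k, odd 'C(n.*2, k.*2) = odd 'C(n, k) /\ ~~ odd 'C(n.*2, k.*2.+1)) ->
    forall k, odd 'C(n.*2.+1, k.*2) = odd 'C(n, k) /\ odd 'C(n.*2.+1, k.*2.+1) = odd 'C(n, k).
  move=> row_n k; split; last first.
    by rewrite odd_binS; have [-> /negbTE->] := row_n k.
  case: k => [|k]; first by rewrite !bin0.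
  rewrite doubleS odd_binS -doubleS.
  by have [_ /negbTE->] := row_n k; have [-> _] := row_n k.+1; rewrite addbF.
have row_even n k : odd 'C(n.*2, k.*2) = odd 'C(n, k) /\ ~~ odd 'C(n.*2, k.*2.+1).
  elim: n k => [|n IHn] k; first by rewrite bin0n; case: k.
  have row_nS := row_odd n IHn; split; last first.
    by rewrite doubleS odd_binS; have [-> ->] := row_nS k; rewrite addbb.
  case: k => [|k]; first by rewrite !bin0.
  rewrite !doubleS odd_binS -doubleS.
  by have [_ ->] := row_nS k; have [-> _] := row_nS k.+1; rewrite odd_binS.
have [e0 /negbTE e1] := row_even m c; have [o0 o1] := row_odd m (row_even m) c.
by case: b; case: e.
Qed.

Lemma odd_bin_carry (b d : bool) a c :
  odd 'C(b + a.*2 + (d + c.*2), b + a.*2) = ~~ (b && d) && odd 'C(a + c, a).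
Proof.
have [/andP[-> ->] | /negbTE bd] := boolP (b && d).
  have -> : (true + a.*2 + (true + c.*2) = false + (a + c).+1.*2)%N by lia.
  by rewrite odd_bin_lucas.
have -> : (b + a.*2 + (d + c.*2) = (b || d) + (a + c).*2)%N by case: b d bd => [] [] //= _; lia.
by rewrite odd_bin_lucas; case: b d bd => [] [].
Qed.

Definition bit_count (k N : nat) : nat := \sum_(i < N) (k %/ 2 ^ i) %% 2.

Lemma bit_count_trunc {k m N : nat} : k < 2 ^ m -> m <= N -> bit_count k N = bit_count k m.
Proof.
move=> k_lt le_mN; apply: (big_ord_trunc _ (fun i => (k %/ 2 ^ i) %% 2) le_mN) => // i le_mi.
by rewrite divn_small // (leq_trans k_lt) // leq_exp2l.
Qed.

Lemma bit_count_stable {k N M : nat} : k < 2 ^ N -> k < 2 ^ M -> bit_count k N = bit_count k M.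
Proof.
move=> ltN ltM; case: (leqP N M) => [le | /ltnW le].
  by rewrite (bit_count_trunc ltN le).
exact: bit_count_trunc.
Qed.

Lemma bit_count_double_add (b : bool) a N : bit_count (b + a.*2) N.+1 = b + bit_count a N.
Proof.
rewrite /bit_count big_ord_recl /= expn0 divn1 modn2 oddD odd_double addbF.
congr (_ + _); first by case: b.
by apply: eq_bigr => i _; rewrite /bump /= add1n expnS divnMA divn2 half_bit_double.
Qed.

Local Open Scope ring_scope.

Definition tm_sign (k : nat) : int := (-1) ^+ thue_morse k.

Lemma tm_signE k : tm_sign k = (-1) ^+ bit_count k k.+1.
Proof. by rewrite /tm_sign /thue_morse modn2 signr_odd. Qed.

Lemma tm_sign0 : tm_sign 0 = 1.
Proof. by rewrite /tm_sign /thue_morse big_ord1. Qed.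

Lemma tm_sign_double_add (b : bool) a : tm_sign (b + a.*2) = (-1) ^+ b * tm_sign a.
Proof.
have lt_exp2 k : (k < 2 ^ k)%N by apply: ltn_expl.
have lt_exp2S k : (k < 2 ^ k.+1)%N by rewrite expnS; have := lt_exp2 k; lia.
have lt_a : (b + a.*2 < 2 ^ a.+2)%N by rewrite !expnS; have := lt_exp2 a; case: b; lia.
by rewrite !tm_signE (bit_count_stable (lt_exp2S _) lt_a) bit_count_double_add exprD.
Qed.

Definition oddz (n : nat) : int := (odd n : nat)%:Z.

Definition tm_term (i j k : nat) : int := oddz 'C(i, k) * tm_sign k * oddz 'C(j, k).

Lemma tm_term_double (b d : bool) a c k :
  tm_term (b + a.*2) (d + c.*2) k.*2 = tm_term a c k.
Proof.
by rewrite /tm_term /oddz -[k.*2]/(false + k.*2)%N !odd_bin_lucas tm_sign_double_add /= mul1r.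
Qed.

Lemma tm_term_doubleS (b d : bool) a c k :
  tm_term (b + a.*2) (d + c.*2) k.*2.+1 = - (b && d)%:R * tm_term a c k.
Proof.
rewrite /tm_term /oddz -[k.*2.+1]/(true + k.*2)%N !odd_bin_lucas tm_sign_double_add.
by case: b; case: d => /=; ring.
Qed.

Lemma tm_sum_trunc i j n : (i < n)%N ->
  \sum_(k < n) tm_term i j k = \sum_(k < i.+1) tm_term i j k.
Proof.
move=> lt_in; apply: (big_ord_trunc _ (tm_term i j) lt_in) => k lt_ik.
by rewrite /tm_term bin_small // mul0r.
Qed.

Lemma oddz_binD_tm_sum i j n : (i < n)%N ->
  oddz 'C(i + j, i) = \sum_(k < n) tm_term i j k.
Proof.
elim/ltn_ind: i j n => i IH j n lt_in; rewrite tm_sum_trunc //.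
have [-> | i_gt0] := posnP i.
  by rewrite big_ord1 /tm_term !bin0 tm_sign0 /oddz /= !mulr1.
have lt_half : (i./2 < i)%N by rewrite -divn2 ltn_Pdiv.
rewrite -(tm_sum_trunc _ _ (i./2).+1.*2); last first.
  by rewrite -{1}(odd_double_half i) doubleS; case: (odd i).
move: (IH _ lt_half) (odd_double_half i) (odd_double_half j).
move: (odd i) (i./2) (odd j) (j./2) => b a d c IHa <- <-.
rewrite big_ord_double /=.
under eq_bigr do rewrite tm_term_double tm_term_doubleS -{1}[tm_term a c _]mul1r -mulrDl.
rewrite -mulr_sumr -(IHa c a.+1) // /oddz odd_bin_carry.
by case: (b && d) => /=; ring.
Qed.

Definition pascal2 n : 'M[int]_n := \matrix_(i, k) oddz 'C(i, k).

Definition tm_signs n : 'rV[int]_n := \row_k tm_sign k.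

Lemma Pbar2_LDLt n : Pbar2 n = pascal2 n *m diag_mx (tm_signs n) *m (pascal2 n)^T.
Proof.
apply/matrixP => i j; rewrite !mxE modn2 -/(oddz _) (oddz_binD_tm_sum i j n (ltn_ord i)).
by apply: eq_bigr => k _; rewrite mul_mx_diag !mxE.
Qed.

Lemma det_pascal2 n : \det (pascal2 n) = 1.
Proof.
rewrite det_trig; first by apply: big1 => i _; rewrite mxE binn.
by apply/forallP => i; apply/forallP => j; apply/implyP => lt_ij; rewrite mxE bin_small.
Qed.

Theorem theorem1p1 (n : nat) (hn : (1 <= n)%N) :
  \det (Pbar2 n) = \prod_(k < n) (-1 : int) ^+ thue_morse k.
Proof.
rewrite Pbar2_LDLt !det_mulmx det_tr det_pascal2 det_diag mul1r mulr1.
by apply: eq_bigr => k _; rewrite mxE.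
Qed.
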